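(* In the multi-hop VAoI network described in the context, the VAoI at the destination node $N+1$ satisfies \[ \Delta_{N+1}(t)=\Delta_1(t-\tau_N)+\beta_N, \] where $\tau_N=\sum_{i=1}^N m_i$ and $\beta_N=\sum_{i=1}^N\eta_{m_i}$, with $m_i$ independent geometric random variables with parameters $\rho_i$ ($\mathbb{P}(m_i=\ell)=(1-\rho_i)^{\ell-1}\rho_i$, $\ell\ge1$) and $\eta_{m_i}$ conditionally on $m_i$ binomial with parameters $m_i$ and $p_g$ (the number of source versions generated during those $m_i$ slots). Moreover $\mathbb{E}[\tau_N]=\sum_{i=1}^N\frac1{\rho_i}$ and $\mathbb{E}[\beta_N]=p_g\sum_{i=1}^N\frac1{\rho_i}$.
   Context: Time is slotted. A source generates a new version in each slot independently with probability $p_g$, and its version index $V_S(t)$ increases by one at the start of the slot following each generation. Nodes $0,1,\dots,N+1$ form a line; node $0$ always holds the current source version ($V_0(t)=V_S(t)$), node $N+1$ is the destination, and nodes $1,\dots,N$ are relays. Each node stores only the latest version it has received. Link $i$ (from node $i$ to node $i+1$) delivers a transmission successfully with probability $\rho_i$, independently across slots and links ($\rho_0=p_s$). Node $0$ transmits according to an update policy; each relay node $i\ge1$ transmits its stored version in every slot, so that $V_{i+1}(t+1)=V_i(t)$ if the transmission on link $i$ at slot $t$ succeeds and $V_{i+1}(t+1)=V_{i+1}(t)$ otherwise. The VAoI at node $j$ is $\Delta_j(t)=V_S(t)-V_j(t)$. The random variable $m_i$ is the number of slots back to the last successful delivery on link $i$ (the relaying delay over link $i$). *)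

From mathcomp Require Import all_boot all_order all_algebra.
From mathcomp Require Import all_classical all_reals all_analysis.
Set Implicit Arguments.
Unset Strict Implicit.
Unset Printing Implicit Defensive.
Import Order.TTheory GRing.Theory Num.Theory.
Local Open Scope ring_scope.
Local Open Scope classical_set_scope.

(* Time slots are integers (infinite past).  The Bernoulli "event" variables
   are  X None s     : a new source version is generated in slot s,
        X (Some i) s : a transmission on link i at slot s succeeds.      *)

Definition bern_param (R : Type) (pg : R) (rho : nat -> R) (a : option nat) : R :=
  match a with None => pg | Some i => rho i end.

Definition valid_index (N : nat) (a : option nat) : bool :=
  match a with None => true | Some i => (i <= N)%N end.

Definition bernoulli_family (R : realType) (d : measure_display)
  (T : measurableType d) (P : probability T R) (N : nat) (pg : R)
  (rho : nat -> R) (X : option nat -> int -> T -> bool) : Prop :=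
  (forall a s, valid_index N a -> measurable [set w : T | X a s w]) /\
  (forall (L : seq (option nat * int)) (b : option nat * int -> bool),
     uniq L -> all (fun x => valid_index N x.1) L ->
     P [set w : T | forall x, x \in L -> X x.1 x.2 w = b x] =
     (\prod_(x <- L) (if b x then bern_param pg rho x.1
                      else 1 - bern_param pg rho x.1))%:E).

(* lookback S s w : number of slots back from time s to the last slot
   (strictly before s) in which S holds, i.e. the least k >= 1 with
   S (s - k); 0 if there is no such slot (a null event). *)
Definition lookback (T : Type) (S : int -> T -> bool) (s : int) (w : T) : nat :=
  match pselect (exists k : nat, S (s - (k.+1)%:Z) w) with
  | left ex => (@ex_minn (fun k => S (s - (k.+1)%:Z) w) ex).+1
  | right _ => 0%N
  end.

(* hop k : the time instant reached after tracing back k hops from the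
   destination N+1 at time t:  hop 0 = t, hop (k+1) = hop k - m_{N-k}. *)
Fixpoint hop (T : Type) (X : option nat -> int -> T -> bool) (N : nat)
  (t : int) (w : T) (k : nat) : int :=
  match k with
  | 0%N => t
  | k'.+1 => let s := hop X N t w k' in
             s - (lookback (X (Some (N - k')%N)) s w)%:Z
  end.

Definition mdelay (T : Type) (X : option nat -> int -> T -> bool) (N : nat)
  (t : int) (i : nat) (w : T) : nat :=
  lookback (X (Some i)) (hop X N t w (N - i)) w.

Definition eta (T : Type) (X : option nat -> int -> T -> bool) (N : nat)
  (t : int) (i : nat) (w : T) : nat :=
  let s := hop X N t w (N - i)%N in
  \sum_(k < mdelay X N t i w) nat_of_bool (X None ((s - 1 - (k : nat)%:Z)%R : int) w).

Definition tau (T : Type) (X : option nat -> int -> T -> bool) (N : nat)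
  (t : int) (w : T) : nat := \sum_(1 <= i < N.+1) mdelay X N t i w.

Definition beta (T : Type) (X : option nat -> int -> T -> bool) (N : nat)
  (t : int) (w : T) : nat := \sum_(1 <= i < N.+1) eta X N t i w.

(* VAoI at node j: Delta_j(s) = V_S(s) - V_j(s), with V 0 = V_S. *)
Definition Delta (T : Type) (V : nat -> int -> T -> int) (j : nat) (s : int)
  (w : T) : int := V 0%N s w - V j s w.

From mathcomp Require Import all_boot all_order all_algebra.
From mathcomp Require Import all_classical all_reals all_analysis.
From mathcomp Require Import measurable_realfun ring lra zify.
Import Order.TTheory GRing.Theory Num.Theory.
Set Implicit Arguments.
Unset Strict Implicit.
Unset Printing Implicit Defensive.
Local Open Scope ring_scope.
Local Open Scope classical_set_scope.

(* The identity is deterministic.  Going back from the destination at time t,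
   node i+1 still holds what node i held just before the last success on link i,
   m_i slots earlier, while the source has meanwhile gained eta_i versions;
   telescoping over the N links gives the identity for every outcome in which
   each link has succeeded before every time, an almost sure event.
   The laws come from a reverse-time strong Markov property: if an event F(s)
   is independent of a family of the Bernoulli variables that contains link i,
   then so is F(s - m) without link i, where m is the lookback on link i from s,
   because {m = l+1} is a cylinder of probability (1-rho_i)^l rho_i on link i
   only and these probabilities sum to 1.  Following the N hops backwards this
   gives the product law of the m_i, the law of (m_i, eta_i), and the tails
   P(m_i > n) = (1 - rho_i)^n, whose series are the expectations. *)

Lemma lookback0P (T : Type) (S : int -> T -> bool) s w :
  lookback S s w = 0%N <-> forall k : nat, ~~ S (s - (k.+1)%:Z) w.
Proof.
rewrite /lookback; case: pselect => [ex|nex]; split => //.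
- by move=> H; case: ex => k Sk; move: (H k); rewrite Sk.
- by move=> _ k; apply/negP => Sk; apply: nex; exists k.
Qed.

Lemma lookbackSP (T : Type) (S : int -> T -> bool) s w l :
  lookback S s w = l.+1 <->
  S (s - (l.+1)%:Z) w /\ forall k : nat, (k < l)%N -> ~~ S (s - (k.+1)%:Z) w.
Proof.
rewrite /lookback; case: pselect => [ex|nex]; last first.
  by split => // -[Sl _]; case: nex; exists l.
case: ex_minnP => m Sm minm; split.
  case=> <-; split => // k km; apply/negP => /minm.
  by rewrite leqNgt km.
case=> Sl Hk; congr _.+1; apply/eqP; rewrite eqn_leq minm //=.
by rewrite leqNgt; apply/negP => /Hk; rewrite Sm.
Qed.

Lemma eq_shift (s : int) (k l : nat) : (s - (k.+1)%:Z == s - (l.+1)%:Z) = (k == l).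
Proof. by rewrite (inj_eq (addrI s)) (inj_eq oppr_inj) eqz_nat eqSS. Qed.

Lemma eseries_geometric (R : realType) (a x : R) : 0 <= x < 1 ->
  (\sum_(n <oo) (a * x ^+ n)%:E = (a / (1 - x))%:E)%E.
Proof.
case/andP=> x0 x1; have x1' : `|x| < 1 by rewrite ger0_norm.
have -> : (fun n => \sum_(0 <= k < n) (a * x ^+ k)%:E)%E = EFin \o series (geometric a x).
  by apply/funext => n /=; rewrite sumEFin.
rewrite EFin_lim; last exact: is_cvg_geometric_series.
congr _%:E; have /(@cvg_unique _ (@Rhausdorff R)) := @cvg_geometric_series _ a _ x1'.
by move/(_ _ (@is_cvg_geometric_series _ a _ x1')) => ->.
Qed.

Lemma eseries_indic_count (R : realType) (m : nat) (f : nat -> bool) :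
  (\sum_(n <oo) (((n < m)%N && f n)%:R : R)%:E = ((\sum_(k < m) f k)%N%:R)%:E)%E.
Proof.
rewrite (@nneseries_split R _ 0 m); last by move=> k _; rewrite lee_fin.
rewrite add0n eseries0 ?adde0; last by move=> i mi _; rewrite ltnNge mi.
rewrite sumEFin natr_sum big_mkord; congr _%:E; apply: eq_bigr => k _.
by rewrite ltn_ord.
Qed.

Lemma indic_setE (T : Type) (R : realType) (b : T -> bool) w :
  (\1_([set w | b w]) w : R) = (b w)%:R.
Proof. by rewrite indicE; case bw: (b w); [rewrite mem_set | rewrite memNset //= bw]. Qed.

Lemma binomial_pmfE (R : realType) (n : nat) (p : R) k :
  binomial_pmf n p k = 'C(n, k)%:R * p ^+ k * (1 - p) ^+ (n - k).
Proof. by rewrite /binomial_pmf -mulr_natl mulrA. Qed.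

Lemma binomial_pmf0n (R : realType) (p : R) k : binomial_pmf 0 p k = (k == 0)%N%:R.
Proof. by case: k => [|k]; rewrite binomial_pmfE ?bin0 ?bin0n ?expr0 ?mulr1 ?mul0r. Qed.

Lemma binomial_pmfS0 (R : realType) (p : R) n :
  binomial_pmf n.+1 p 0 = (1 - p) * binomial_pmf n p 0.
Proof. by rewrite !binomial_pmfE !bin0 !subn0 exprS; ring. Qed.

Lemma binomial_pmfSS (R : realType) (p : R) n k :
  binomial_pmf n.+1 p k.+1 = p * binomial_pmf n p k + (1 - p) * binomial_pmf n p k.+1.
Proof.
rewrite !binomial_pmfE binS natrD subSS.
have [kn|nk] := ltnP k n.
  by rewrite (_ : (n - k = (n - k.+1).+1)%N); [rewrite !exprS; ring | lia].
by rewrite bin_small ?ltnS // (_ : (n - k = 0)%N) ?exprS; [ring | lia].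
Qed.

Section relay_chain.
Variables (T : Type) (N : nat) (X : option nat -> int -> T -> bool)
  (V : nat -> int -> T -> int).
Hypothesis hV0 : forall s w, V 0%N (s + 1) w = V 0%N s w + (X None s w : nat)%:Z.
Hypothesis hVi : forall i s w, (1 <= i <= N)%N ->
  V i.+1 (s + 1) w = if X (Some i) s w then V i s w else V i.+1 s w.

Lemma source_version_shift (s : int) w m : V 0%N s w =
  V 0%N (s - m%:Z) w +
  (\sum_(k < m) nat_of_bool (X None ((s - 1 - (k : nat)%:Z)%R : int) w))%N%:Z.
Proof.
elim: m => [|m IH]; first by rewrite subr0 big_ord0 addr0.
rewrite IH big_ord_recr /= PoszD addrA (_ : s - m%:Z = (s - (m.+1)%:Z) + 1); last lia.
by rewrite hV0 -addrA addrAC (_ : s - 1 - m%:Z = s - (m.+1)%:Z) //; lia.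
Qed.

Lemma relay_version_lookback i (s : int) w l : (1 <= i <= N)%N ->
  lookback (X (Some i)) s w = l.+1 -> V i.+1 s w = V i (s - (l.+1)%:Z) w.
Proof.
move=> iN /lookbackSP [Sl Hk].
(* from the success at s - l - 1 on, node i+1 keeps the version it then received *)
have hold n : (n <= l)%N -> V i.+1 (s - (l - n)%:Z) w = V i (s - (l.+1)%:Z) w.
  elim: n => [_|n IH nl].
    by rewrite subn0 (_ : s - l%:Z = s - (l.+1)%:Z + 1) ?hVi ?Sl //; lia.
  rewrite (_ : s - (l - n.+1)%:Z = s - ((l - n.+1).+1)%:Z + 1); last lia.
  rewrite hVi // (negbTE (Hk _ _)); last lia.
  by rewrite (_ : s - ((l - n.+1).+1)%:Z = s - (l - n)%:Z) ?IH ?(ltnW nl) //; lia.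
by have := hold l (leqnn l); rewrite subnn subr0.
Qed.

Lemma Delta_hop t w : (forall i s, (1 <= i <= N)%N -> (0 < lookback (X (Some i)) s w)%N) ->
  forall j, (j <= N)%N ->
  Delta V N.+1 t w = Delta V (N.+1 - j)%N (hop X N t w j) w +
     (\sum_((N - j).+1 <= i < N.+1) eta X N t i w)%N%:Z /\
  hop X N t w j = t - (\sum_((N - j).+1 <= i < N.+1) mdelay X N t i w)%N%:Z.
Proof.
move=> pos; elim=> [_|j IH jN]; first by rewrite !big_geq ?subn0 //=; split; lia.
pose i0 := (N - j)%N.
have [IH1 IH2] := IH (ltnW jN); rewrite -/i0 in IH1 IH2.
have i0N : (1 <= i0 <= N)%N by rewrite /i0; lia.
have Nj : (N - i0 = j)%N by rewrite /i0; lia.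
rewrite (_ : (N - j.+1).+1 = i0)%N; last by rewrite /i0; lia.
rewrite !(@big_ltn _ _ _ i0) ?ltnS; try by case/andP: i0N.
have mdelay_i0 : mdelay X N t i0 w = lookback (X (Some i0)) (hop X N t w j) w by rewrite /mdelay Nj.
case E: (lookback (X (Some i0)) (hop X N t w j) w) (pos i0 (hop X N t w j) i0N) => [//|l] _.
have hopS : hop X N t w j.+1 = hop X N t w j - (l.+1)%:Z by rewrite /= -/i0 E.
split; last by rewrite hopS IH2 mdelay_i0 E PoszD opprD addrA addrAC.
rewrite IH1 (_ : (N.+1 - j = i0.+1)%N); last by rewrite /i0; lia.
rewrite (_ : (N.+1 - j.+1 = i0)%N); last by rewrite /i0; lia.
rewrite /Delta (relay_version_lookback i0N E) (source_version_shift (hop X N t w j) w l.+1) hopS.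
rewrite (_ : eta X N t i0 w =
    (\sum_(k < l.+1) X None (hop X N t w j - 1 - k%:Z)%R w)%N); last first.
  by rewrite /eta Nj mdelay_i0 E.
by rewrite PoszD; lia.
Qed.

End relay_chain.

Section bernoulli_events.
Variables (R : realType) (d : measure_display) (T : measurableType d)
  (P : probability T R) (N : nat) (pg : R) (rho : nat -> R)
  (X : option nat -> int -> T -> bool).
Hypothesis rho01 : forall i, (i <= N)%N -> 0 < rho i <= 1.
Hypothesis HX : bernoulli_family P N pg rho X.

Definition cylinder (L : seq (option nat * int)) (b : option nat * int -> bool) : set T :=
  [set w | forall x, x \in L -> X x.1 x.2 w = b x].

Definition cylinder_prob (L : seq (option nat * int)) (b : option nat * int -> bool) : R :=
  \prod_(x <- L) (if b x then bern_param pg rho x.1 else 1 - bern_param pg rho x.1).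

Definition admissible (S : pred (option nat)) (L : seq (option nat * int)) : bool :=
  uniq L && all (fun x => valid_index N x.1 && S x.1) L.

Lemma admissible_valid S L : admissible S L -> all (fun x => valid_index N x.1) L.
Proof. by case/andP=> _ /allP H; apply/allP => x /H /andP[]. Qed.

Lemma P_cylinder S L b : admissible S L -> P (cylinder L b) = (cylinder_prob L b)%:E.
Proof.
move=> adL; case: HX => _ ->//; first by case/andP: adL.
exact: admissible_valid adL.
Qed.

Lemma cylinder_nil b : cylinder [::] b = setT.
Proof. by apply/seteqP; split => w // _ x; rewrite in_nil. Qed.

Lemma cylinder_cons x L b :
  cylinder (x :: L) b = [set w | X x.1 x.2 w = b x] `&` cylinder L b.
Proof.
apply/seteqP; split => w /=.
  by move=> H; split => [|y yL]; apply: H; rewrite inE ?eqxx ?yL ?orbT.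
by case=> H1 H2 y; rewrite inE => /orP[/eqP->|/H2].
Qed.

Lemma cylinder1 x b : cylinder [:: x] b = [set w | X x.1 x.2 w = b x].
Proof. by rewrite cylinder_cons cylinder_nil setIT. Qed.

Lemma measurable_X_eq a s (c : bool) : valid_index N a -> measurable [set w | X a s w = c].
Proof.
move=> va; have mX := HX.1 a s va.
have -> : [set w | X a s w = c] = if c then [set w | X a s w] else ~` [set w | X a s w].
  by case: c; apply/seteqP; split => w /=; case: (X a s w).
by case: c => //; exact: measurableC.
Qed.

Lemma measurable_cylinder L b : all (fun x => valid_index N x.1) L -> measurable (cylinder L b).
Proof.
elim: L => [_|x L IH /andP[vx vL]]; first by rewrite cylinder_nil.
by rewrite cylinder_cons; apply: measurableI; [exact: measurable_X_eq | exact: IH].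
Qed.

Definition bcat (L1 : seq (option nat * int)) (b1 b2 : option nat * int -> bool)
  (x : option nat * int) : bool := if x \in L1 then b1 x else b2 x.

Lemma cylinderI L1 L2 b1 b2 : uniq (L1 ++ L2) ->
  cylinder L1 b1 `&` cylinder L2 b2 = cylinder (L1 ++ L2) (bcat L1 b1 b2).
Proof.
rewrite cat_uniq => /and3P[_ /hasPn dis _].
have bcat2 x : x \in L2 -> bcat L1 b1 b2 x = b2 x by move=> /dis /negbTE; rewrite /bcat => ->.
apply/seteqP; split => w /=.
  by case=> H1 H2 x; rewrite mem_cat => /orP[xL|xL]; [rewrite /bcat xL H1 | rewrite bcat2 ?H2].
move=> H; split => x xL; rewrite H ?mem_cat ?xL ?orbT //.
  by rewrite /bcat xL.
exact: bcat2.
Qed.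

Lemma cylinder_prob_cat L1 L2 b1 b2 : uniq (L1 ++ L2) ->
  cylinder_prob (L1 ++ L2) (bcat L1 b1 b2) = cylinder_prob L1 b1 * cylinder_prob L2 b2.
Proof.
rewrite cat_uniq => /and3P[_ /hasPn dis _].
rewrite /cylinder_prob big_cat /=; congr (_ * _); rewrite !big_seq; apply: eq_bigr => x xL.
  by rewrite /bcat xL.
by rewrite /bcat (negbTE (dis x xL)).
Qed.

Definition indep_of (S : pred (option nat)) (F : set T) (c : R) : Prop :=
  measurable F /\
  forall L b, admissible S L -> P (cylinder L b `&` F) = (cylinder_prob L b * c)%:E.

Lemma indep_of_prob S F c : indep_of S F c -> P F = c%:E.
Proof.
case=> _ /(_ [::] (fun=> true) isT).
by rewrite cylinder_nil setTI /cylinder_prob big_nil mul1r.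
Qed.

Lemma indep_ofI (S S' : pred (option nat)) F c L b :
  indep_of S F c -> admissible S L -> (forall x, x \in L -> ~~ S' x.1) ->
  (forall a, S' a -> S a) ->
  indep_of S' (cylinder L b `&` F) (cylinder_prob L b * c).
Proof.
move=> [mF HF] adL notS' S'S; split.
  by apply: measurableI => //; exact/measurable_cylinder/admissible_valid/adL.
move=> L' b' adL'.
have uL : uniq (L' ++ L).
  case/andP: adL' => uL' /allP aL'; case/andP: adL => uL _.
  rewrite cat_uniq uL' uL andbT /=; apply/hasPn => x /notS' nx.
  by apply/negP => /aL' /andP[_]; rewrite (negbTE nx).
rewrite setIA cylinderI // HF ?cylinder_prob_cat ?mulrA //.
rewrite /admissible uL all_cat /=; apply/andP; split; last by case/andP: adL => _.
by case/andP: adL' => _ /allP H; apply/allP => x /H /andP[-> /S'S].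
Qed.

Definition link_window (i : nat) (s : int) (n : nat) : seq (option nat * int) :=
  [seq (Some i, s - (k.+1)%:Z) | k <- iota 0 n].

Lemma mem_link_window i s n k :
  ((Some i, s - (k.+1)%:Z) \in link_window i s n) = (k < n)%N.
Proof.
rewrite mem_map ?mem_iota //.
by move=> k1 k2 [] /eqP; rewrite eq_shift => /eqP.
Qed.

Lemma admissible_link_window (S : pred (option nat)) i s n :
  (i <= N)%N -> S (Some i) -> admissible S (link_window i s n).
Proof.
move=> iN Si; rewrite /admissible map_inj_uniq ?iota_uniq /=.
  by apply/allP => x /mapP [k _ ->] /=; rewrite iN Si.
by move=> k1 k2 [] /eqP; rewrite eq_shift => /eqP.
Qed.

Definition only_at (u : int) (x : option nat * int) : bool := x.2 == u.

Lemma cylinder_prob_last_success i s l :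
  cylinder_prob (link_window i s l.+1) (only_at (s - (l.+1)%:Z)) = (1 - rho i) ^+ l * rho i.
Proof.
rewrite /cylinder_prob big_map -[iota 0 l.+1]/(index_iota 0 l.+1) big_nat_recr //=.
rewrite /only_at /= eqxx -[in RHS](subn0 l) -prodr_const_nat; congr (_ * _).
by apply: eq_big_nat => k /andP[_ kl]; rewrite eq_shift (ltn_eqF kl).
Qed.

Lemma cylinder_prob_no_success i s n :
  cylinder_prob (link_window i s n) (fun=> false) = (1 - rho i) ^+ n.
Proof. by rewrite /cylinder_prob big_map -[in RHS](subn0 n) -prodr_const_nat /index_iota subn0. Qed.

Definition lookback_eq (i : nat) (s : int) (l : nat) : set T :=
  [set w | lookback (X (Some i)) s w = l].

Lemma lookback_eqS_cylinder i s l :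
  lookback_eq i s l.+1 = cylinder (link_window i s l.+1) (only_at (s - (l.+1)%:Z)).
Proof.
apply/seteqP; split => w /=.
  move=> /lookbackSP [Sl Hk] x /mapP [k]; rewrite mem_iota ltnS /= => kl -> /=.
  rewrite /only_at /= eq_shift; have [kl'|lk] := ltnP k l.
    by rewrite (negbTE (Hk _ kl')) ltn_eqF.
  have -> : k = l by apply/eqP; rewrite eqn_leq kl lk.
  by rewrite eqxx.
move=> H; apply/lookbackSP; split.
  by have := H (Some i, s - (l.+1)%:Z); rewrite mem_link_window /only_at eqxx; apply.
move=> k kl; have := H (Some i, s - (k.+1)%:Z).
by rewrite mem_link_window ltnS (ltnW kl) /only_at /= eq_shift (ltn_eqF kl) => /(_ isT) ->.
Qed.

Lemma P_lookback_eqS i s l : (i <= N)%N ->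
  P (lookback_eq i s l.+1) = ((1 - rho i) ^+ l * rho i)%:E.
Proof.
move=> iN; rewrite lookback_eqS_cylinder -(cylinder_prob_last_success i s).
exact/P_cylinder/(admissible_link_window (S := predT)).
Qed.

Lemma measurable_lookback_eq i s l : (i <= N)%N -> measurable (lookback_eq i s l).
Proof.
move=> iN; case: l => [|l]; last first.
  by rewrite lookback_eqS_cylinder; apply: measurable_cylinder; apply/allP => x /mapP[k _ ->].
have -> : lookback_eq i s 0 = \bigcap_k ~` [set w | X (Some i) (s - (k.+1)%:Z) w].
  apply/seteqP; split => w; first by move=> /lookback0P H k _; apply/negP/H.
  by move=> H; apply/lookback0P => k; apply/negP/(H k I).
by apply: bigcapT_measurable => k; apply/measurableC/(HX.1).
Qed.

Lemma lookback_partition i s (F : int -> set T) :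
  [set w | F (s - (lookback (X (Some i)) s w)%:Z) w] =
  (lookback_eq i s 0 `&` F s) `|` \bigcup_l (lookback_eq i s l.+1 `&` F (s - (l.+1)%:Z)).
Proof.
apply/seteqP; split => w /=.
  case E: (lookback _ s w) => [|l] Fw; [left | right; exists l] => //; split => //.
  by rewrite subr0 in Fw.
by case=> [[->]|[l _ [->]]]; rewrite ?subr0.
Qed.

Lemma P_lookback_partition i s (F : int -> set T) (C : set T) : (i <= N)%N ->
  measurable C -> (forall s, measurable (F s)) ->
  P (C `&` [set w | F (s - (lookback (X (Some i)) s w)%:Z) w]) =
  (P (C `&` (lookback_eq i s 0 `&` F s)) +
   \sum_(l <oo) P (C `&` (lookback_eq i s l.+1 `&` F (s - (l.+1)%:Z)%R)))%E.
Proof.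
move=> iN mC mF.
have mE l s' : measurable (C `&` (lookback_eq i s l `&` F s')).
  by apply: measurableI => //; apply: measurableI => //; exact: measurable_lookback_eq.
rewrite lookback_partition setIUr measureU // setI_bigcupr.
- congr (_ + _)%E.
  transitivity (\sum_(l <oo | l \in setT)
      P (C `&` (lookback_eq i s l.+1 `&` F (s - (l.+1)%:Z)%R)))%E.
    apply: (measure_bigcup P) => // l l' _ _ [w [[_ [H1 _]] [_ [H2 _]]]].
    by move: H1 H2; rewrite /lookback_eq /= => -> [].
  by apply: eq_eseriesl => l; rewrite in_setT.
- by apply: bigcupT_measurable => l; exact: mE.
- apply/seteqP; split => [w [[_ [H0 _]] [l _ [_ [HS _]]]]|//].
  by move: H0 HS; rewrite /lookback_eq /= => ->.
Qed.

Lemma eseries_geometric_link i (a : R) : (i <= N)%N ->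
  (\sum_(n <oo) (a * (1 - rho i) ^+ n)%:E = (a / rho i)%:E)%E.
Proof.
move=> iN; have [r0 r1] := andP (rho01 iN).
by rewrite eseries_geometric ?subKr // subr_ge0 r1 /= ltrBlDr ltrDl.
Qed.

Lemma P_lookback_eq0 i s : (i <= N)%N -> P (lookback_eq i s 0) = 0%E.
Proof.
move=> iN; have [r0 _] := andP (rho01 iN).
have := @P_lookback_partition i s (fun=> setT) setT iN measurableT (fun=> measurableT).
rewrite !setTI setIT probability_setT.
under eq_eseriesr do rewrite setTI setIT P_lookback_eqS // mulrC.
rewrite eseries_geometric_link // divff ?gt_eqF //.
have : (0 <= P (lookback_eq i s 0) <= 1)%E.
  by rewrite measure_ge0 probability_le1 //; exact: measurable_lookback_eq.
case: (P _) => [r||] //=; rewrite !lee_fin => /andP[? ?].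
by move/eqP; rewrite -EFinD eqe => /eqP ?; congr _%:E; lra.
Qed.

Lemma indep_of_lookback (S S' : pred (option nat)) i (F : int -> set T) c :
  (i <= N)%N -> (forall a, S a -> S' a) -> S' (Some i) -> ~~ S (Some i) ->
  (forall s, indep_of S' (F s) c) ->
  forall s, indep_of S [set w | F (s - (lookback (X (Some i)) s w)%:Z) w] c.
Proof.
move=> iN SS' S'i nSi HF s; have mF s' : measurable (F s') by case: (HF s').
split.
  rewrite lookback_partition; apply: measurableU.
    by apply: measurableI => //; exact: measurable_lookback_eq.
  by apply: bigcupT_measurable => l; apply: measurableI => //; exact: measurable_lookback_eq.
move=> L b adL.
have mC : measurable (cylinder L b) by exact/measurable_cylinder/admissible_valid/adL.
rewrite P_lookback_partition //.
have -> : P (cylinder L b `&` (lookback_eq i s 0 `&` F s)) = 0%E.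
  apply: (subset_measure0 _ (measurable_lookback_eq s 0 iN) _ (P_lookback_eq0 s iN)).
    by apply: measurableI => //; apply: measurableI => //; exact: measurable_lookback_eq.
  by move=> w [_ []].
(* on [lookback = l+1] the event F is read at the deterministic time s - l - 1 *)
have Pl l : P (cylinder L b `&` (lookback_eq i s l.+1 `&` F (s - (l.+1)%:Z))) =
    ((cylinder_prob L b * c * rho i) * (1 - rho i) ^+ l)%:E.
  have nS x : x \in link_window i s l.+1 -> ~~ S x.1 by case/mapP => k _ ->.
  rewrite lookback_eqS_cylinder.
  have [_ ->] := indep_ofI (only_at (s - (l.+1)%:Z)) (HF (s - (l.+1)%:Z))
    (admissible_link_window s l.+1 iN S'i) nS SS'.
  - by rewrite cylinder_prob_last_success; congr _%:E; ring.
  - exact: adL.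
under eq_eseriesr do rewrite Pl.
rewrite add0e eseries_geometric_link //; congr _%:E.
by have [r0 _] := andP (rho01 iN); field; rewrite gt_eqF.
Qed.

Definition is_link_above (m : nat) (a : option nat) : bool :=
  if a is Some i then (m < i)%N else false.

Lemma P_at_hop t j (F : int -> set T) c : (j <= N)%N ->
  (forall s, indep_of (is_link_above (N - j)) (F s) c) ->
  measurable [set w | F (hop X N t w j) w] /\ P [set w | F (hop X N t w j) w] = c%:E.
Proof.
elim: j F => [|j IH] F jN HF.
  by split; [exact: (HF t).1 | exact: indep_of_prob (HF t)].
pose G s := [set w | F (s - (lookback (X (Some (N - j)%N)) s w)%:Z) w].
have -> : [set w | F (hop X N t w j.+1) w] = [set w | G (hop X N t w j) w] by [].
apply: IH; first exact: ltnW.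
apply: (indep_of_lookback (S' := is_link_above (N - j.+1))) => //=.
- exact: leq_subr.
- by case=> //= i; lia.
- lia.
- by rewrite ltnn.
Qed.

Lemma P_mdelay_at_hop t (l : nat -> nat) : (forall i, (1 <= i <= N)%N -> (0 < l i)%N) ->
  forall j (F : int -> set T) c, (j <= N)%N ->
  (forall s, indep_of (is_link_above (N - j)) (F s) c) ->
  P [set w | (forall i, (N - j < i <= N)%N -> mdelay X N t i w = l i) /\ F (hop X N t w j) w] =
  ((\prod_((N - j).+1 <= i < N.+1) ((1 - rho i) ^+ (l i).-1 * rho i)) * c)%:E.
Proof.
move=> lpos; elim=> [|j IH] F c jN HF.
  rewrite subn0 big_geq // mul1r -(indep_of_prob (HF t)); congr (P _).
  by apply/seteqP; split => [w [] //|w Fw]; split => // i; lia.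
pose i0 := (N - j)%N.
have i0N : (1 <= i0 <= N)%N by rewrite /i0; lia.
have [l0 li0] : exists l0, l i0 = l0.+1 by case: (l i0) (lpos _ i0N) => // l0; exists l0.
pose G s := lookback_eq i0 s (l i0) `&` F (s - (l i0)%:Z).
have mdelay_i0 w : mdelay X N t i0 w = lookback (X (Some i0)) (hop X N t w j) w.
  by rewrite /mdelay (_ : (N - i0 = j)%N) //; rewrite /i0; lia.
have -> : [set w | (forall i, (N - j.+1 < i <= N)%N -> mdelay X N t i w = l i) /\
                   F (hop X N t w j.+1) w] =
          [set w | (forall i, (N - j < i <= N)%N -> mdelay X N t i w = l i) /\
                   G (hop X N t w j) w].
  apply/seteqP; split => w /= [Hl Fw].
    have m0 : mdelay X N t i0 w = l i0 by apply: Hl; rewrite /i0; lia.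
    move: Fw => /=; rewrite -/i0 -mdelay_i0 m0 => Fw.
    by split=> [i ii|]; [apply: Hl; lia | rewrite /G /lookback_eq /= -mdelay_i0 m0].
  move: Fw; rewrite /G /lookback_eq /= -mdelay_i0 => -[m0 Fw].
  split; last by rewrite m0.
  move=> i ii; have [->//|ii0] := eqVneq i i0; apply: Hl; rewrite /i0 in ii0; lia.
rewrite (IH G ((1 - rho i0) ^+ (l i0).-1 * rho i0 * c)) ?(ltnW jN) //.
  rewrite (_ : (N - j.+1).+1 = i0)%N; last by rewrite /i0; lia.
  by rewrite [in RHS]big_ltn; [congr _%:E; ring | lia].
move=> s; rewrite /G li0 /= lookback_eqS_cylinder -(cylinder_prob_last_success i0 s l0).
apply: (indep_ofI (S := is_link_above (N - j.+1))) => //.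
- by apply: admissible_link_window => /=; rewrite /i0; lia.
- by move=> x /mapP [k _ ->] /=; rewrite ltnn.
- by case => // i /=; lia.
Qed.

Definition gen_count (s : int) (l k : nat) : set T :=
  [set w | (\sum_(j < l) nat_of_bool (X None ((s - 1 - (j : nat)%:Z)%R : int) w))%N = k].

Lemma gen_count0 s k : gen_count s 0 k = if k is 0 then setT else set0.
Proof.
rewrite (_ : gen_count s 0 k = [set _ | 0%N = k]).
  by case: k => [|k]; apply/seteqP; split => w.
by apply/seteqP; split => w; rewrite /gen_count /= big_ord0.
Qed.

Lemma gen_countS s l k : gen_count s l.+1 k =
  (cylinder [:: (None, s - 1 - l%:Z)] (fun=> true) `&`
     (if k is k'.+1 then gen_count s l k' else set0)) `|`
  (cylinder [:: (None, s - 1 - l%:Z)] (fun=> false) `&` gen_count s l k).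
Proof.
rewrite !cylinder1; apply/seteqP; split => w /=; rewrite /gen_count /= big_ord_recr /=.
  by case: (X None _ w) => <-; [left; rewrite addn1 | right; rewrite addn0].
by case=> -[->]; [case: k => // k <-; rewrite addn1 | move=> <-; rewrite addn0].
Qed.

Lemma measurable_gen_count s l k : measurable (gen_count s l k).
Proof.
elim: l k => [|l IH] k; first by rewrite gen_count0; case: k.
rewrite gen_countS; apply: measurableU; apply: measurableI => //; try by apply: measurable_cylinder.
by case: k.
Qed.

(* Stronger than [indep_of]: the induction on [l] moves the oldest generation
   variable of the window into [L]. *)
Lemma P_cylinderI_gen_count s l k L b : admissible predT L ->
  (forall x, x \in L -> x.1 = None -> ~~ ((s - l%:Z <= x.2) && (x.2 < s))) ->
  P (cylinder L b `&` gen_count s l k) = (cylinder_prob L b * binomial_pmf l pg k)%:E.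
Proof.
elim: l k L b => [|l IH] k L b adL outL.
  rewrite gen_count0 binomial_pmf0n; case: k => [|k]; last by rewrite setI0 measure0 mulr0.
  by rewrite setIT (P_cylinder _ adL) mulr1.
pose x : option nat * int := (None, s - 1 - l%:Z).
have uLx : uniq (L ++ [:: x]).
  rewrite cat_uniq (andP adL).1 /= orbF andbT; apply/negP => xL.
  by have /negP := outL x xL erefl; apply; apply/andP; split => /=; lia.
have adLx : admissible predT (L ++ [:: x]).
  by rewrite /admissible uLx all_cat (andP adL).2.
have outLx y : y \in L ++ [:: x] -> y.1 = None -> ~~ ((s - l%:Z <= y.2) && (y.2 < s)).
  rewrite mem_cat inE => /orP[yL yN|/eqP -> _ /=]; last by apply/negP => /andP[]; lia.
  by apply: contra (outL y yL yN) => /andP[? ?]; apply/andP; split; lia.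
have Pcat (c : bool) : cylinder_prob (L ++ [:: x]) (bcat L b (fun=> c)) =
    cylinder_prob L b * (if c then pg else 1 - pg).
  by rewrite cylinder_prob_cat // /cylinder_prob big_seq1.
have mx c : measurable (cylinder [:: x] c) by exact: measurable_cylinder.
have mL : measurable (cylinder L b) by exact/measurable_cylinder/admissible_valid/adL.
have PU A B : measurable A -> measurable B -> A `&` B = set0 -> P (A `|` B) = (P A + P B)%E.
  by move=> mA mB AB; rewrite measureU.
rewrite gen_countS setIUr PU; first last.
- apply/seteqP; split => // w [[_ [H1 _]] [_ [H2 _]]].
  by move: H1 H2; rewrite !cylinder1 /= => ->.
- by apply: measurableI => //; apply: measurableI => //; exact: measurable_gen_count.
- by apply: measurableI => //; apply: measurableI => //; case: k => //; exact: measurable_gen_count.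
rewrite !setIA !cylinderI // (IH k _ _ adLx outLx) Pcat; case: k => [|k].
  by rewrite setI0 measure0 add0e binomial_pmfS0; congr _%:E; ring.
rewrite (IH k _ _ adLx outLx) Pcat binomial_pmfSS -EFinD.
by congr _%:E; ring.
Qed.

Lemma indep_of_gen_count s l k :
  indep_of (fun a => a != None) (gen_count s l k) (binomial_pmf l pg k).
Proof.
split=> [|L b /andP[uL /allP aL]]; first exact: measurable_gen_count.
apply: P_cylinderI_gen_count => [|x /aL /andP[_ /eqP xN] /xN //].
by rewrite /admissible uL; apply/allP => x /aL /andP[-> _].
Qed.

Lemma indep_of_lookback_gen_count i s l k : (1 <= i <= N)%N ->
  indep_of (is_link_above i) (lookback_eq i s l.+1 `&` gen_count s l.+1 k)
    ((1 - rho i) ^+ l * rho i * binomial_pmf l.+1 pg k).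
Proof.
case/andP=> _ iN; rewrite lookback_eqS_cylinder -(cylinder_prob_last_success i s l).
apply: (indep_ofI (S := fun a => a != None)); first exact: indep_of_gen_count.
- exact: admissible_link_window.
- by move=> x /mapP [k' _ ->] /=; rewrite ltnn.
- by case.
Qed.

Lemma P_setD_lookback_eq0 A i s : (i <= N)%N -> measurable A ->
  P (A `\` lookback_eq i s 0) = P A.
Proof.
move=> iN mA; have mZ := measurable_lookback_eq s 0 iN.
have DI : P A = (P (A `\` lookback_eq i s 0) + P (A `&` lookback_eq i s 0))%E :=
  measureDI P mA mZ.
have AZ0 : P (A `&` lookback_eq i s 0) = 0%E :=
  subset_measure0 (measurableI _ _ mA mZ) mZ (@subIsetr _ _ _) (P_lookback_eq0 s iN).
by rewrite DI AZ0 adde0.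
Qed.

Definition lookback_gt (i : nat) (s : int) (n : nat) : set T :=
  [set w | (n < lookback (X (Some i)) s w)%N].

Lemma lookback_gt_cylinder i s n :
  lookback_gt i s n = cylinder (link_window i s n) (fun=> false) `\` lookback_eq i s 0.
Proof.
apply/seteqP; split => w; rewrite /lookback_gt /lookback_eq /=.
  case E: (lookback _ s w) => [//|m] nm; have [_ Hk] := (lookbackSP _ _ _ _).1 E.
  split=> // x /mapP [k]; rewrite mem_iota add0n => /andP[_ kn] -> /=.
  by apply/negbTE/Hk; lia.
move=> [Hc]; case E: (lookback _ s w) => [//|m] _.
rewrite ltnS leqNgt; apply/negP => mn.
have [Sm _] := (lookbackSP _ _ _ _).1 E.
by have := Hc (Some i, s - (m.+1)%:Z); rewrite mem_link_window Sm => /(_ mn).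
Qed.

Lemma indep_of_lookback_gt (S : pred (option nat)) i s n : (i <= N)%N -> ~~ S (Some i) ->
  indep_of S (lookback_gt i s n) ((1 - rho i) ^+ n).
Proof.
move=> iN nSi; rewrite lookback_gt_cylinder.
have mW : measurable (cylinder (link_window i s n) (fun=> false)).
  by apply: measurable_cylinder; apply/allP => x /mapP[k _ ->].
split=> [|L b adL]; first exact/measurableD/measurable_lookback_eq.
have mL : measurable (cylinder L b) by exact/measurable_cylinder/admissible_valid/adL.
have uL : uniq (L ++ link_window i s n).
  rewrite cat_uniq (andP adL).1 (andP (admissible_link_window (S := predT) s n iN isT)).1 andbT /=.
  apply/hasPn => x /mapP [k _ ->]; apply/negP => /(allP (andP adL).2) /andP[_].
  by rewrite (negbTE nSi).
rewrite setIDA P_setD_lookback_eq0 //; last exact: measurableI.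
rewrite cylinderI // (P_cylinder (S := predT)) ?cylinder_prob_cat ?cylinder_prob_no_success //.
rewrite /admissible uL all_cat /=; apply/andP; split; apply/allP => x.
  by move/(allP (admissible_valid adL)) ->.
by case/mapP => k _ ->; rewrite /= iN.
Qed.

Lemma ae_lookback_gt0 :
  {ae P, forall w, forall i s, (i <= N)%N -> (0 < lookback (X (Some i)) s w)%N}.
Proof.
pose Z (n i : nat) := if (i <= N)%N then lookback_eq i (Posz n) 0 `|` lookback_eq i (Negz n) 0
                      else set0.
have negZ : P.-negligible (\bigcup_n \bigcup_i Z n i).
  apply: negligible_bigcup => n; apply: negligible_bigcup => i; rewrite /Z.
  case: ifP => iN; last exact: negligible_set0.
  have null s : P.-negligible (lookback_eq i s 0).
    by apply/(negligibleP _ (measurable_lookback_eq s 0 iN)); exact: P_lookback_eq0.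
  exact: negligibleU.
apply: negligibleS negZ => w /= notpos; apply: contrapT => notZ; apply: notpos => i s iN.
rewrite lt0n; apply/negP => /eqP l0; apply: notZ.
by case: s l0 => n l0; exists n => //; exists i => //; rewrite /Z iN; [left | right].
Qed.

Lemma ae_Delta_destination (V : nat -> int -> T -> int) t :
  (forall s w, V 0%N (s + 1) w = V 0%N s w + (X None s w : nat)%:Z) ->
  (forall i s w, (1 <= i <= N)%N ->
     V i.+1 (s + 1) w = if X (Some i) s w then V i s w else V i.+1 s w) ->
  {ae P, forall w, Delta V N.+1 t w =
                   Delta V 1%N (t - (tau X N t w)%:Z) w + (beta X N t w)%:Z}.
Proof.
move=> hV0 hVi; apply: filterS ae_lookback_gt0 => w pos.
have pos1 i s : (1 <= i <= N)%N -> (0 < lookback (X (Some i)) s w)%N.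
  by case/andP => _; exact: pos.
have [-> ->] := Delta_hop hV0 hVi t pos1 (leqnn N).
by rewrite subnn subSnn.
Qed.

Lemma P_mdelay_joint t (l : nat -> nat) : (forall i, (1 <= i <= N)%N -> (0 < l i)%N) ->
  P [set w | forall i, (1 <= i <= N)%N -> mdelay X N t i w = l i] =
  (\prod_(1 <= i < N.+1) ((1 - rho i) ^+ (l i).-1 * rho i))%:E.
Proof.
move=> lpos; have indepT (s : int) : indep_of (is_link_above (N - N)) setT 1.
  by split=> // L b adL; rewrite setIT mulr1; exact: P_cylinder adL.
have := P_mdelay_at_hop t lpos (leqnn N) indepT; rewrite subnn mulr1 => <-.
by congr (P _); apply/seteqP; split => w /= => [|[]//]; split.
Qed.

Lemma P_mdelay_eta t i l k : (1 <= i <= N)%N -> (0 < l)%N ->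
  P [set w | mdelay X N t i w = l /\ eta X N t i w = k] =
  ((1 - rho i) ^+ l.-1 * rho i * binomial_pmf l pg k)%:E.
Proof.
case: l => // l iN _.
have HF s : indep_of (is_link_above (N - (N - i))) (lookback_eq i s l.+1 `&` gen_count s l.+1 k)
    ((1 - rho i) ^+ l * rho i * binomial_pmf l.+1 pg k).
  by rewrite subKn; [exact: indep_of_lookback_gen_count | case/andP: iN].
rewrite -(P_at_hop t (leq_subr i N) HF).2; congr (P _).
apply/seteqP; split => w [ml ek]; split => //;
  by move: ml ek; rewrite /eta /mdelay /lookback_eq /= => ->.
Qed.

Lemma expectation_count (m : nat -> T -> nat) (g : nat -> nat -> T -> bool) (a : nat -> R) :
  (forall i n, (1 <= i <= N)%N ->
     measurable [set w | (n < m i w)%N && g i n w] /\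
     P [set w | (n < m i w)%N && g i n w] = (a i * (1 - rho i) ^+ n)%:E) ->
  (\int[P]_w ((\sum_(1 <= i < N.+1) \sum_(n < m i w) g i n w)%N%:R)%:E =
   (\sum_(1 <= i < N.+1) a i / rho i)%:E)%E.
Proof.
move=> hA.
pose A i n := if (1 <= i <= N)%N then [set w | (n < m i w)%N && g i n w] else set0.
have mA i n : measurable (A i n) by rewrite /A; case: ifP => // /(hA i n) [].
have mIA i n : measurable_fun setT (fun w => ((\1_(A i n) w : R)%:E : \bar R)).
  by apply/measurable_EFinP; exact: measurable_indic.
transitivity (\int[P]_w (\sum_(i <- index_iota 1 N.+1) \sum_(n <oo) (\1_(A i n) w)%:E))%E.
  apply: eq_integral => w _; rewrite natr_sum -sumEFin; apply: eq_big_nat => i iN.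
  rewrite -(eseries_indic_count R (m i w) (fun n => g i n w)); apply: eq_eseriesr => n _.
  by rewrite /A iN indic_setE.
rewrite ge0_integral_sum //; first last.
- by move=> i w _; apply: nneseries_ge0 => n _ _; rewrite lee_fin.
- move=> i; apply: (eq_measurable_fun _ (fun w _ => eq_eseriesl _ _ (fun n => erefl))).
  by apply: ge0_emeasurable_sum => // k w _ _; rewrite lee_fin.
rewrite -sumEFin; apply: eq_big_nat => i iN.
rewrite integral_nneseries //.
under eq_eseriesr do rewrite integral_indic // setIT /A iN /= (hA _ _ iN).2.
by rewrite eseries_geometric_link //; case/andP: iN.
Qed.

Lemma expectation_tau t :
  (\int[P]_w ((tau X N t w)%:R)%:E = (\sum_(1 <= i < N.+1) (rho i)^-1)%:E)%E.
Proof.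
have tauE w : tau X N t w = (\sum_(1 <= i < N.+1) \sum_(n < mdelay X N t i w) true)%N.
  by apply: eq_bigr => i _; rewrite sum1_card card_ord.
under eq_integral do rewrite tauE.
rewrite (@expectation_count _ (fun _ _ _ => true) (fun=> 1)).
  by congr _%:E; apply: eq_bigr => i _; rewrite div1r.
move=> i n iN; rewrite mul1r.
have HF s : indep_of (is_link_above (N - (N - i))) (lookback_gt i s n) ((1 - rho i) ^+ n).
  by case/andP: iN => _ iN; rewrite subKn //; apply: indep_of_lookback_gt; rewrite /= ?ltnn.
have [mF PF] := P_at_hop t (leq_subr i N) HF.
have -> : [set w | (n < mdelay X N t i w)%N && true] =
    [set w | lookback_gt i (hop X N t w (N - i)) n w] by apply/seteqP; split => w /=; rewrite andbT.
by split.
Qed.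

Lemma expectation_beta t :
  (\int[P]_w ((beta X N t w)%:R)%:E = (pg * \sum_(1 <= i < N.+1) (rho i)^-1)%:E)%E.
Proof.
pose g i n w := X None (hop X N t w (N - i) - 1 - n%:Z) w.
have betaE w : beta X N t w = (\sum_(1 <= i < N.+1) \sum_(n < mdelay X N t i w) g i n w)%N by [].
under eq_integral do rewrite betaE.
rewrite (@expectation_count _ g (fun=> pg)) ?mulr_sumr // => i n /andP[_ iN].
have HF s : indep_of (is_link_above (N - (N - i)))
    (cylinder [:: (None, s - 1 - n%:Z)] (fun=> true) `&` lookback_gt i s n) (pg * (1 - rho i) ^+ n).
  have HG : indep_of (fun a => a != Some i) (lookback_gt i s n) ((1 - rho i) ^+ n).
    by apply: indep_of_lookback_gt; rewrite /= ?eqxx.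
  rewrite subKn // (_ : pg = cylinder_prob [:: (None, s - 1 - n%:Z)] (fun=> true)); last first.
    by rewrite /cylinder_prob big_seq1.
  apply: indep_ofI HG _ _ _ => //.
  - by move=> x; rewrite inE => /eqP ->.
  - by case=> // j /=; apply: contraTneq => -[->]; rewrite ltnn.
have [mF PF] := P_at_hop t (leq_subr i N) HF.
have -> : [set w | (n < mdelay X N t i w)%N && g i n w] =
    [set w | (cylinder [:: (None, hop X N t w (N - i) - 1 - n%:Z)] (fun=> true) `&`
              lookback_gt i (hop X N t w (N - i)) n) w].
  apply/seteqP; split => w /=; rewrite cylinder1 /=; first by case/andP.
  by case=> X1 Ln; apply/andP.
by split.
Qed.

End bernoulli_events.

Theorem lemma3 (R : realType) (d : measure_display) (T : measurableType d)
  (P : probability T R) (N : nat) (pg : R) (rho : nat -> R)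
  (X : option nat -> int -> T -> bool) (u : int -> T -> bool)
  (V : nat -> int -> T -> int) :
  0 <= pg <= 1 ->
  (forall i, (i <= N)%N -> 0 < rho i <= 1) ->
  bernoulli_family P N pg rho X ->
  (forall s w, V 0%N (s + 1) w = V 0%N s w + ((X None s w : nat)%:Z)) ->
  (forall s w, V 1%N (s + 1) w =
                 if u s w && X (Some 0%N) s w then V 0%N s w else V 1%N s w) ->
  (forall i s w, (1 <= i <= N)%N ->
     V i.+1 (s + 1) w = if X (Some i) s w then V i s w else V i.+1 s w) ->
  forall t : int,
  [/\ {ae P, forall w, Delta V N.+1 t w =
                        Delta V 1%N (t - (tau X N t w)%:Z) w + (beta X N t w)%:Z},
      (forall l : nat -> nat, (forall i, (1 <= i <= N)%N -> (0 < l i)%N) ->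
         P [set w | forall i, (1 <= i <= N)%N -> mdelay X N t i w = l i] =
         (\prod_(1 <= i < N.+1) ((1 - rho i) ^+ (l i).-1 * rho i))%:E),
      (forall i l k, (1 <= i <= N)%N -> (0 < l)%N ->
         P [set w | mdelay X N t i w = l /\ eta X N t i w = k] =
         ((1 - rho i) ^+ l.-1 * rho i *
            ('C(l, k)%:R * pg ^+ k * (1 - pg) ^+ (l - k)))%:E),
      (\int[P]_w ((tau X N t w)%:R)%:E = (\sum_(1 <= i < N.+1) (rho i)^-1)%:E)%E &
      (\int[P]_w ((beta X N t w)%:R)%:E =
         (pg * \sum_(1 <= i < N.+1) (rho i)^-1)%:E)%E].
Proof.
move=> _ rho01 HX hV0 _ hVi t; split.
- exact (ae_Delta_destination rho01 HX t hV0 hVi).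
- exact (P_mdelay_joint HX t).
- by move=> i l k iN l0; rewrite (P_mdelay_eta rho01 HX) // binomial_pmfE.
- exact (expectation_tau rho01 HX t).
- exact (expectation_beta rho01 HX t).
Qed.
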